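(* Let $n\ge 3$ and let $Q$ be the set of all faces of $\Delta_{n+1}$ of the form $A(F)$, $B(F)$, $C(F,S)$, $D(F,S)$ with $F$ a face of $\Delta_n$ and $S\in F$ (equivalently, the faces of $\Delta_{n+1}$ containing no vertex of the form $\{i,n+1\}$, $2\le i\le n$). Then $Q$ is a subcomplex of $\Delta_{n+1}$ and it is contractible.
   Context: The Whitehouse complex $\Delta_n$ ($n\ge 3$) is the simplicial complex with vertex set $V_n=\{S\subseteq\{2,\dots,n\}: 2\le |S|\le n-2\}$, in which a subset $F\subseteq V_n$ is a face iff for all $S,T\in F$ one has $S\subseteq T$, $T\subseteq S$, or $S\cap T=\emptyset$. (So $\Delta_3=\{\emptyset\}$.) For a face $F$ of $\Delta_n$: $A(F)=F$; $B(F)=F\cup\{\{2,\dots,n\}\}$; for $S\in F$, $C(F,S)=\{T\cup\{n+1\}: T\in F, S\subseteq T\}\cup\{T: T\in F, S\not\subseteq T\}$ and $D(F,S)=C(F,S)\cup\{S\}$. *)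

From HB Require Import structures.
From mathcomp Require Import all_boot all_order all_algebra.
From mathcomp Require Import reals Rstruct.
Set Implicit Arguments. Unset Strict Implicit. Unset Printing Implicit Defensive.
Import Order.TTheory GRing.Theory Num.Theory.

Notation Real := Rdefinitions.R.

(* Elements of {2,...,N} are represented in 'I_N.+1 (values 0..N), restricted
   to values >= 2. *)
Definition ground (N : nat) : {set 'I_N.+1} := [set i : 'I_N.+1 | 2 <= i].

Definition is_vertex (N : nat) (S : {set 'I_N.+1}) : bool :=
  [&& S \subset ground N, 2 <= #|S| & #|S| <= N - 2].
Arguments is_vertex N S : clear implicits.

Definition laminar_pair (T : finType) (S U : {set T}) : bool :=
  [|| S \subset U, U \subset S | [disjoint S & U]].

Definition is_face (N : nat) (F : {set {set 'I_N.+1}}) : bool :=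
  [forall S in F, is_vertex N S] &&
  [forall S in F, forall U in F, laminar_pair S U].
Arguments is_face N F : clear implicits.

Definition emb (n : nat) (S : {set 'I_n.+1}) : {set 'I_n.+2} :=
  [set widen_ord (leqnSn n.+1) i | i in S].
Definition embF (n : nat) (F : {set {set 'I_n.+1}}) : {set {set 'I_n.+2}} :=
  [set emb S | S in F].

Definition top (n : nat) : 'I_n.+2 := ord_max.

Definition Aface (n : nat) (F : {set {set 'I_n.+1}}) : {set {set 'I_n.+2}} :=
  embF F.
Definition Bface (n : nat) (F : {set {set 'I_n.+1}}) : {set {set 'I_n.+2}} :=
  emb (ground n) |: embF F.
Definition Cface (n : nat) (F : {set {set 'I_n.+1}}) (S : {set 'I_n.+1})
  : {set {set 'I_n.+2}} :=
  [set (if S \subset T then top n |: emb T else emb T) | T : {set 'I_n.+1} in F].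
Definition Dface (n : nat) (F : {set {set 'I_n.+1}}) (S : {set 'I_n.+1})
  : {set {set 'I_n.+2}} :=
  emb S |: Cface F S.

Definition inQ (n : nat) (G : {set {set 'I_n.+2}}) : Prop :=
  exists F : {set {set 'I_n.+1}}, is_face n F /\
    (G = Aface F \/ G = Bface F \/
     exists2 S, S \in F & (G = Cface F S \/ G = Dface F S)).

Definition subcomplex (V : finType) (K L : {set V} -> Prop) : Prop :=
  (forall G, K G -> L G) /\ (forall G H : {set V}, K G -> H \subset G -> K H).

Local Open Scope ring_scope.

Definition realization (V : finType) (K : {set V} -> Prop) (x : V -> Real) : Prop :=
  (forall v, 0 <= x v) /\ \sum_(v : V) x v = 1 /\ K [set v | x v != 0].

(* X subset of R^V (product / sup-norm topology) is contractible *)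
Definition contractible (V : finType) (X : (V -> Real) -> Prop) : Prop :=
  exists (x0 : V -> Real) (H : (V -> Real) -> Real -> (V -> Real)),
    X x0 /\
    (forall x t, X x -> 0 <= t <= 1 -> X (H x t)) /\
    (forall x, X x -> H x 0 = x /\ H x 1 = x0) /\
    (forall x t, X x -> 0 <= t <= 1 -> forall e : Real, 0 < e ->
       exists2 d : Real, 0 < d &
         forall y s, X y -> 0 <= s <= 1 ->
           (forall v, `|y v - x v| < d) -> `|s - t| < d ->
           forall v, `|H y s v - H x t v| < e).

(* If no vertex of G contains n+1, then G minus the vertex {2,...,n} is a copy of a
   face F of Delta_n.  Otherwise the vertices of G containing n+1 pairwise meet, hence form
   a chain by laminarity; its least element S u {n+1} determines S, and G without the
   vertex S is C(F,S), where F collects the T whose lift (T, or T u {n+1} when S <= T) lies in G.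

   Contractibility is an explicit deformation of barycentric coordinates.  During the time
   interval [k/(n+1), (k+1)/(n+1)] the mass of every vertex w containing n+1 with |w| = k
   slides linearly onto w minus n+1; since smaller vertices are processed first, every
   intermediate support is laminar.  On the last interval [n/(n+1), 1] all the mass moves
   to the apex {2,...,n}, which is comparable with every remaining vertex because none of
   them contains n+1 any more. *)

From mathcomp Require Import all_boot all_order all_algebra reals Rstruct lra ring zify.
From Stdlib Require Import FunctionalExtensionality.
Set Implicit Arguments. Unset Strict Implicit. Unset Printing Implicit Defensive.
Import Order.TTheory GRing.Theory Num.Theory.

(** * Laminar families and faces *)

Lemma laminar_pairC (T : finType) (A B : {set T}) : laminar_pair A B = laminar_pair B A.
Proof. by rewrite /laminar_pair orbA (orbC (A \subset B)) -orbA disjoint_sym. Qed.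

Lemma laminar_pair_refl (T : finType) (A : {set T}) : laminar_pair A A.
Proof. by rewrite /laminar_pair subxx. Qed.

Lemma laminar_pair_supset (T : finType) (A B : {set T}) : B \subset A -> laminar_pair A B.
Proof. by rewrite /laminar_pair => ->; rewrite orbT. Qed.

Lemma laminar_setD1 (T : finType) (A B : {set T}) x :
  laminar_pair A B -> x \in A -> x \in B -> laminar_pair (A :\ x) (B :\ x).
Proof.
case/or3P=> [sAB|sBA|disj] xA xB.
- by rewrite /laminar_pair (setSD _ sAB).
- by rewrite /laminar_pair (setSD _ sBA) orbT.
- by have := disjointFr disj xA; rewrite xB.
Qed.

Lemma laminar_setD1r (T : finType) (A B : {set T}) x :
  laminar_pair A B -> x \in B -> (x \in A -> #|B| <= #|A|) -> laminar_pair A (B :\ x).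
Proof.
case/or3P=> [sAB|sBA|disj] xB card_le.
- have [xA|xNA] := boolP (x \in A).
    have/eqP-> : A == B by rewrite eqEcard sAB card_le.
    exact/laminar_pair_supset/subD1set.
  apply/or3P/Or31/subsetP=> y yA; rewrite in_setD1 (subsetP sAB) // andbT.
  by apply: contraNneq xNA => <-.
- exact/laminar_pair_supset/(subset_trans (subD1set B x)).
- by apply/or3P/Or33; exact: disjointWr (subD1set B x) disj.
Qed.

Lemma laminar_min_mem (T : finType) (G : {set {set T}}) (x : T) (W0 : {set T}) :
    (forall U V, U \in G -> V \in G -> laminar_pair U V) -> W0 \in G -> x \in W0 ->
  exists2 W, W \in G /\ x \in W & forall V, V \in G -> x \in V -> W \subset V.
Proof.
move=> lamG W0G xW0; pose P W := (W \in G) && (x \in W).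
have P_W0 : P W0 by rewrite /P W0G xW0.
have [W /andP[WG xW] minW] := arg_minnP (fun W : {set T} => #|W|) P_W0.
exists W => // V VG xV; have/or3P[//|VW|disj] := lamG _ _ WG VG.
  by have/eqP<- : V == W by rewrite eqEcard VW minW /P ?VG ?xV.
by have := disjointFr disj xW; rewrite xV.
Qed.

Lemma setD1_cases (T : finType) (G H : {set T}) (x : T) :
  G :\ x = H -> G = H \/ G = x |: H.
Proof.
move=> <-; have [xG|xNG] := boolP (x \in G); first by right; rewrite setD1K.
by left; apply/esym/setDidPl; rewrite disjoint_sym disjoints1.
Qed.

Lemma is_faceP N (F : {set {set 'I_N.+1}}) :
  is_face N F <-> (forall S, S \in F -> is_vertex N S) /\
                  (forall S U, S \in F -> U \in F -> laminar_pair S U).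
Proof.
rewrite /is_face; split.
  case/andP=> /forallP vF /forallP lamF; split=> [S SF|S U SF UF].
    exact: (implyP (vF S) SF).
  exact: (implyP (forallP (implyP (lamF S) SF) U) UF).
case=> vF lamF; apply/andP; split; apply/forallP=> S; apply/implyP=> SF.
  exact: vF.
by apply/forallP=> U; apply/implyP=> UF; exact: lamF.
Qed.

Lemma face_subset N (F F' : {set {set 'I_N.+1}}) :
  is_face N F -> F' \subset F -> is_face N F'.
Proof.
case/is_faceP=> vF lamF /subsetP sF'F; apply/is_faceP.
by split=> [S /sF'F|S U /sF'F SF /sF'F]; [exact: vF | exact: lamF].
Qed.

Lemma face_setU1 N (A : {set 'I_N.+1}) (F : {set {set 'I_N.+1}}) :
  is_face N F -> is_vertex N A -> (forall S, S \in F -> laminar_pair A S) ->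
  is_face N (A |: F).
Proof.
case/is_faceP=> vF lamF vA lamA; apply/is_faceP; split.
  by move=> S; rewrite in_setU1 => /predU1P[->|]; [|exact: vF].
move=> S U; rewrite !in_setU1 => /predU1P[->|SF] /predU1P[->|UF].
- exact: laminar_pair_refl.
- exact: lamA.
- by rewrite laminar_pairC; exact: lamA.
- exact: lamF.
Qed.

Lemma card_ground N : #|ground N| = N.-1.
Proof.
have lt_shift (i : 'I_N.-1) : i.+2 < N.+1 by case: i => /= i; lia.
pose shift i := Ordinal (lt_shift i).
have shift_inj : injective shift by move=> i j /(congr1 val) /= [] /val_inj.
suff -> : ground N = shift @: [set: 'I_N.-1] by rewrite card_imset // cardsT card_ord.
apply/setP=> x; rewrite inE; apply/idP/imsetP => [x_ge2|[i _ ->] //].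
have lt_x : x - 2 < N.-1 by have := ltn_ord x; lia.
by exists (Ordinal lt_x) => //; apply/val_inj => /=; lia.
Qed.

Lemma vertex_gt0 N (S : {set 'I_N.+1}) : is_vertex N S -> exists s, s \in S.
Proof. by case/and3P=> _ S_ge2 _; apply/card_gt0P; lia. Qed.

(** * Embedding Delta_n into Delta_(n+1) *)

Section Embedding.

Variable n : nat.
Implicit Types (A B S T : {set 'I_n.+1}) (W : {set 'I_n.+2}).

Definition widen1 : 'I_n.+1 -> 'I_n.+2 := widen_ord (leqnSn n.+1).

Lemma widen1_inj : injective widen1.
Proof. by move=> i j /(congr1 val) /= /val_inj. Qed.

Lemma mem_emb T i : (widen1 i \in emb T) = (i \in T).
Proof. exact/mem_imset/widen1_inj. Qed.

Lemma widen1_neq_top i : widen1 i != top n.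
Proof. by rewrite -val_eqE /= neq_ltn ltn_ord. Qed.

Lemma widen1_onto x : x != top n -> exists i, x = widen1 i.
Proof.
move=> x_ntop; have lt_x : x < n.+1.
  by move: x_ntop (ltn_ord x); rewrite -val_eqE /= ltnS leq_eqVlt => /negbTE ->.
by exists (Ordinal lt_x); apply/val_inj.
Qed.

Lemma top_notin_emb T : top n \notin emb T.
Proof. by apply/imsetP=> -[i _ /eqP]; rewrite eq_sym (negbTE (widen1_neq_top i)). Qed.

Lemma emb_subset A B : (emb A \subset emb B) = (A \subset B).
Proof.
apply/idP/idP => [/subsetP sub|]; last exact: imsetS.
by apply/subsetP=> i iA; rewrite -(mem_emb B) sub ?mem_emb.
Qed.

Lemma emb_disjoint A B : [disjoint emb A & emb B] = [disjoint A & B].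
Proof. exact/imset_disjoint/widen1_inj. Qed.

Lemma card_emb A : #|emb A| = #|A|.
Proof. exact/card_imset/widen1_inj. Qed.

Lemma emb_inj : injective (@emb n).
Proof. exact/imset_inj/widen1_inj. Qed.

Lemma laminar_emb A B : laminar_pair (emb A) (emb B) = laminar_pair A B.
Proof. by rewrite /laminar_pair !emb_subset emb_disjoint. Qed.

Lemma emb_subset_ground A : (emb A \subset ground n.+1) = (A \subset ground n).
Proof.
apply/subsetP/subsetP => sub x.
  by move=> xA; have := sub _ (imset_f widen1 xA); rewrite !inE.
by case/imsetP=> i iA ->; have := sub _ iA; rewrite !inE.
Qed.

Lemma subset_setU1_emb T : emb T \subset top n |: emb T.
Proof. exact: subsetUr. Qed.

Lemma card_setU1_emb T : #|top n |: emb T| = #|T|.+1.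
Proof. by rewrite cardsU1 top_notin_emb card_emb. Qed.

Lemma setU1_emb_subset A B :
  (top n |: emb A \subset top n |: emb B) = (A \subset B).
Proof.
apply/idP/idP => [/subsetP sub|]; last by rewrite -emb_subset; exact: setUS.
apply/subsetP=> i iA; have := sub (widen1 i); rewrite !in_setU1 mem_emb iA orbT.
by rewrite (negbTE (widen1_neq_top i)) mem_emb; apply.
Qed.

Lemma emb_subset_setU1 A B : (emb A \subset top n |: emb B) = (A \subset B).
Proof.
apply/idP/idP => [/subsetP sub|]; last first.
  by move=> sAB; apply: subset_trans (subset_setU1_emb B); rewrite emb_subset.
apply/subsetP=> i iA; have := sub (widen1 i); rewrite in_setU1 !mem_emb iA.
by rewrite (negbTE (widen1_neq_top i)); apply.
Qed.

Lemma setU1_emb_subsetN A B : ~~ (top n |: emb A \subset emb B).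
Proof. by apply/subsetP=> /(_ (top n) (setU11 _ _)); apply/negP/top_notin_emb. Qed.

Lemma laminar_setU1_emb A B :
  laminar_pair (top n |: emb A) (top n |: emb B) -> laminar_pair A B.
Proof.
rewrite /laminar_pair !setU1_emb_subset => /or3P[->|->|disj]; rewrite ?orbT //.
by have := disjointFr disj (setU11 _ _); rewrite setU11.
Qed.

Lemma laminar_setU1_emb_emb A B :
  laminar_pair (top n |: emb A) (emb B) -> laminar_pair A B.
Proof.
rewrite /laminar_pair emb_subset_setU1 (negbTE (setU1_emb_subsetN _ _)) /=.
by rewrite -emb_disjoint => /orP[->|/(disjointWl (subset_setU1_emb A))->]; rewrite ?orbT.
Qed.

Lemma vertex_emb T : is_vertex n T -> is_vertex n.+1 (emb T).
Proof. by case/and3P=> *; apply/and3P; rewrite emb_subset_ground card_emb; split=> //; lia. Qed.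

Lemma vertex_setU1_emb T :
  2 <= n -> is_vertex n T -> is_vertex n.+1 (top n |: emb T).
Proof.
move=> n_ge2 /and3P[Tg T_ge2 T_le]; apply/and3P; rewrite card_setU1_emb.
split; try lia; rewrite subUset emb_subset_ground Tg andbT sub1set inE /=; lia.
Qed.

Lemma vertex_embW T :
  is_vertex n.+1 (emb T) -> T != ground n -> is_vertex n T.
Proof.
case/and3P; rewrite emb_subset_ground card_emb => Tg T_ge2 T_le T_ng.
apply/and3P; split=> //; rewrite leqNgt; apply: contra T_ng => T_gt.
by rewrite eqEcard Tg card_ground; lia.
Qed.

Lemma vertex_setU1_embW T :
  is_vertex n.+1 (top n |: emb T) -> 3 <= #|top n |: emb T| -> is_vertex n T.
Proof.
case/and3P; rewrite subUset emb_subset_ground card_setU1_emb => /andP[_ Tg] _ T_le T_ge.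
by apply/and3P; split=> //; lia.
Qed.

Definition restr W : {set 'I_n.+1} := [set i | widen1 i \in W].

Lemma emb_restr W : emb (restr W) = W :\ top n.
Proof.
apply/setP=> x; rewrite in_setD1; have [->|x_ntop] /= := eqVneq x (top n).
  exact/negbTE/top_notin_emb.
by have [i ->] := widen1_onto x_ntop; rewrite mem_emb inE.
Qed.

Lemma emb_restr_notin W : top n \notin W -> emb (restr W) = W.
Proof. by move=> W_ntop; rewrite emb_restr; apply/setDidPl; rewrite disjoint_sym disjoints1. Qed.

Lemma emb_restr_in W : top n \in W -> top n |: emb (restr W) = W.
Proof. by move=> W_top; rewrite emb_restr setD1K. Qed.

End Embedding.

Arguments widen1 {n}.

(** * Q as the faces without a vertex {i, n+1} *)

Definition no_top_edge n (G : {set {set 'I_n.+2}}) : Prop :=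
  forall i : 'I_n.+2, 2 <= i <= n -> [set i; top n] \notin G.

Lemma no_top_edgeI n (G : {set {set 'I_n.+2}}) :
  (forall W, W \in G -> top n \in W -> 3 <= #|W|) -> no_top_edge G.
Proof.
move=> card_top i _; apply: contraT; rewrite negbK => /card_top.
by rewrite !inE eqxx orbT cards2 => /(_ isT); case: (i != top n).
Qed.

Lemma card_top_vertex n (G : {set {set 'I_n.+2}}) W :
  is_face n.+1 G -> no_top_edge G -> W \in G -> top n \in W -> 3 <= #|W|.
Proof.
case/is_faceP=> vG _ noedge WG W_top; case/and3P: (vG W WG) => Wg W_ge2 _.
rewrite ltnNge; apply: contraT; rewrite negbK => W_le2.
have : #|W :\ top n| == 1.
  by have := cardsD1 (top n) W; rewrite W_top add1n => eqW; rewrite -eqSS -eqW eqn_leq W_le2.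
case/cards1P=> i Wi; have/setD1P[i_ntop iW] : i \in W :\ top n by rewrite Wi set11.
have eqW : W = [set i; top n] by rewrite -(setD1K W_top) Wi setUC.
have i_ge2 : 2 <= i by have := subsetP Wg i iW; rewrite inE.
have i_le : i <= n by move: i_ntop (ltn_ord i); rewrite -val_eqE /=; lia.
by have := noedge i; rewrite i_ge2 i_le -eqW WG => /(_ isT).
Qed.

Lemma no_top_edgeU1_emb n (T : {set 'I_n.+1}) G :
  no_top_edge G -> no_top_edge (emb T |: G).
Proof.
move=> noedge i i_range; rewrite in_setU1 (negbTE (noedge i i_range)) orbF.
apply/eqP=> /setP/(_ (top n)); rewrite !inE eqxx orbT.
by rewrite (negbTE (top_notin_emb _)).
Qed.

Definition apex n : {set 'I_n.+2} := emb (ground n).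

Lemma vertex_apex n : 3 <= n -> is_vertex n.+1 (apex n).
Proof.
by move=> n_ge3; apply/and3P; rewrite emb_subset_ground card_emb card_ground subxx; split=> //; lia.
Qed.

Lemma subset_apex n (V : {set 'I_n.+2}) :
  is_vertex n.+1 V -> top n \notin V -> V \subset apex n.
Proof.
move=> vV V_ntop; rewrite -(emb_restr_notin V_ntop) emb_subset -emb_subset_ground.
by rewrite emb_restr_notin //; case/and3P: vV.
Qed.

Definition lift_at n (S T : {set 'I_n.+1}) : {set 'I_n.+2} :=
  if S \subset T then top n |: emb T else emb T.

Lemma CfaceE n (F : {set {set 'I_n.+1}}) S : Cface F S = lift_at S @: F.
Proof. by []. Qed.

Section LiftAt.

Variables (n : nat) (S : {set 'I_n.+1}).
Implicit Types (T : {set 'I_n.+1}).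

Lemma laminar_lift_at T1 T2 : (exists s, s \in S) ->
  laminar_pair T1 T2 -> laminar_pair (lift_at S T1) (lift_at S T2).
Proof.
move=> [s sS] lamT; wlog sST1 : T1 T2 lamT / S \subset T1.
  move=> lam_sub; case: (boolP (S \subset T1)) => [|nsST1]; first exact: lam_sub.
  case: (boolP (S \subset T2)) => [sST2|nsST2].
    by rewrite laminar_pairC lam_sub // laminar_pairC.
  by rewrite /lift_at (negbTE nsST1) (negbTE nsST2) laminar_emb.
rewrite /lift_at sST1; case: ifP => sST2; case/or3P: lamT => lamT.
- by rewrite /laminar_pair setU1_emb_subset lamT.
- by rewrite /laminar_pair !setU1_emb_subset lamT orbT.
- by have := disjointFr lamT (subsetP sST1 s sS); rewrite (subsetP sST2).
- by rewrite (subset_trans sST1 lamT) in sST2.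
- by rewrite /laminar_pair emb_subset_setU1 lamT orbT.
- suff disj : [disjoint top n |: emb T1 & emb T2] by rewrite /laminar_pair disj !orbT.
  rewrite disjoints_subset subUset sub1set in_setC top_notin_emb.
  by rewrite -disjoints_subset emb_disjoint.
Qed.

Lemma laminar_lift_atW T1 T2 :
  laminar_pair (lift_at S T1) (lift_at S T2) -> laminar_pair T1 T2.
Proof.
rewrite /lift_at; case: ifP => _; case: ifP => _.
- exact: laminar_setU1_emb.
- exact: laminar_setU1_emb_emb.
- by rewrite laminar_pairC (laminar_pairC T1); exact: laminar_setU1_emb_emb.
- by rewrite laminar_emb.
Qed.

Lemma vertex_lift_at T : 2 <= n -> is_vertex n T -> is_vertex n.+1 (lift_at S T).
Proof.
by move=> n_ge2 vT; rewrite /lift_at; case: ifP => _; [exact: vertex_setU1_emb|exact: vertex_emb].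
Qed.

Lemma card_lift_at_top T :
  is_vertex n T -> top n \in lift_at S T -> 3 <= #|lift_at S T|.
Proof.
rewrite /lift_at; case: ifP => _; last by rewrite (negbTE (top_notin_emb _)).
by rewrite card_setU1_emb; case/and3P; lia.
Qed.

Lemma lift_at_restr (W : {set 'I_n.+2}) :
  (top n \in W -> S \subset restr W) -> (top n \notin W -> ~~ (S \subset restr W)) ->
  lift_at S (restr W) = W.
Proof.
rewrite /lift_at; case: (boolP (top n \in W)) => [W_top /(_ isT) -> _|W_ntop _ /(_ isT)/negbTE->].
  exact: emb_restr_in.
exact: emb_restr_notin.
Qed.

End LiftAt.

Section FacesOfQ.

Variables (n : nat) (F : {set {set 'I_n.+1}}).
Hypotheses (n_ge3 : 3 <= n) (faceF : is_face n F).

Lemma Aface_face : is_face n.+1 (Aface F) /\ no_top_edge (Aface F).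
Proof.
case/is_faceP: faceF => vF lamF; split.
  apply/is_faceP; split=> [_ /imsetP[T TF ->]|_ _ /imsetP[T1 T1F ->] /imsetP[T2 T2F ->]].
    exact/vertex_emb/vF.
  by rewrite laminar_emb; exact: lamF.
by apply: no_top_edgeI => _ /imsetP[T _ ->]; rewrite (negbTE (top_notin_emb _)).
Qed.

Lemma Bface_face : is_face n.+1 (Bface F) /\ no_top_edge (Bface F).
Proof.
have [faceA noedgeA] := Aface_face; split; last exact: no_top_edgeU1_emb.
apply: face_setU1 faceA (vertex_apex n_ge3) _ => _ /imsetP[T TF ->].
case/is_faceP: faceF => vF _; case/and3P: (vF T TF) => Tg _ _.
by rewrite /apex laminar_emb /laminar_pair Tg orbT.
Qed.

Variables (S : {set 'I_n.+1}).
Hypothesis SF : S \in F.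

Lemma Cface_face : is_face n.+1 (Cface F S) /\ no_top_edge (Cface F S).
Proof.
case/is_faceP: faceF => vF lamF; rewrite CfaceE; split; last first.
  by apply: no_top_edgeI => _ /imsetP[T TF ->]; exact/card_lift_at_top/vF.
apply/is_faceP; split=> [_ /imsetP[T TF ->]|_ _ /imsetP[T1 T1F ->] /imsetP[T2 T2F ->]].
  by apply: vertex_lift_at; [lia | exact: vF].
exact/laminar_lift_at/lamF/T2F/T1F/vertex_gt0/vF.
Qed.

Lemma Dface_face : is_face n.+1 (Dface F S) /\ no_top_edge (Dface F S).
Proof.
have [faceC noedgeC] := Cface_face; split; last exact: no_top_edgeU1_emb.
case/is_faceP: faceF => vF lamF; apply: face_setU1 faceC (vertex_emb (vF S SF)) _.
rewrite CfaceE => _ /imsetP[T TF ->]; rewrite /lift_at; case: ifP => sST.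
  by rewrite /laminar_pair emb_subset_setU1 sST.
by rewrite laminar_emb; exact: lamF.
Qed.

End FacesOfQ.

Lemma inQ_face n (G : {set {set 'I_n.+2}}) :
  3 <= n -> inQ G -> is_face n.+1 G /\ no_top_edge G.
Proof.
move=> n_ge3 [F [faceF [->|[->|[S SF [->|->]]]]]].
- exact: Aface_face.
- exact: Bface_face.
- exact: Cface_face.
- exact: Dface_face.
Qed.

Section FaceToQ.

Variables (n : nat) (G : {set {set 'I_n.+2}}).
Hypotheses (faceG : is_face n.+1 G) (noedgeG : no_top_edge G).

Lemma inQ_top_free : (forall W, W \in G -> top n \notin W) -> inQ G.
Proof.
move=> G_ntop; have [vG lamG] := (is_faceP _).1 faceG.
pose F := [set T | (emb T \in G) && (T != ground n)].
have faceF : is_face n F.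
  apply/is_faceP; split=> [T|T U]; rewrite !inE.
    by case/andP=> TG; exact/vertex_embW/vG.
  by case/andP=> TG _ /andP[UG _]; rewrite -laminar_emb; exact: lamG.
have GF : G :\ apex n = embF F.
  apply/setP=> W; rewrite in_setD1; apply/andP/imsetP => [[W_napex WG]|[T]].
    exists (restr W); last by rewrite emb_restr_notin ?G_ntop.
    rewrite inE emb_restr_notin ?G_ntop // WG /=.
    by apply: contra_neq W_napex => eqW; rewrite /apex -eqW emb_restr_notin ?G_ntop.
  by rewrite inE => /andP[TG T_ng] ->; split=> //; apply: contra_neq T_ng => /emb_inj.
exists F; split=> //; case: (setD1_cases GF) => ->; [left | right; left] => //.
Qed.

Variables (S : {set 'I_n.+1}).
Hypotheses (SG : top n |: emb S \in G)
  (minS : forall W, W \in G -> top n \in W -> top n |: emb S \subset W).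

Let F := [set T | lift_at S T \in G].

Lemma vertex_min_top : is_vertex n S.
Proof.
have [vG _] := (is_faceP _).1 faceG.
exact/vertex_setU1_embW/(card_top_vertex faceG noedgeG SG (setU11 _ _))/vG.
Qed.

Lemma face_min_top : is_face n F.
Proof.
have [vG lamG] := (is_faceP _).1 faceG.
apply/is_faceP; split=> [T|T U]; rewrite /F !inE; last first.
  by move=> TG UG; exact: laminar_lift_atW (lamG _ _ TG UG).
rewrite /lift_at; case: ifP => [sST TG|nsST TG].
  exact/vertex_setU1_embW/(card_top_vertex faceG noedgeG TG (setU11 _ _))/vG.
apply: vertex_embW; first exact: vG.
by apply: contraFneq nsST => ->; case/and3P: vertex_min_top.
Qed.

Lemma top_free_min_top W :
  W \in G -> top n \notin W -> S \subset restr W -> W = emb S.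
Proof.
have [_ lamG] := (is_faceP _).1 faceG.
move=> WG W_ntop sSW; rewrite -(emb_restr_notin W_ntop) in WG *.
case/or3P: (lamG _ _ SG WG) => [sSW'|sWS|disj].
- by move: sSW'; rewrite (negbTE (setU1_emb_subsetN _ _)).
- by congr emb; apply/eqP; rewrite eqEsubset sSW andbT -emb_subset_setU1.
- have [s sS] := vertex_gt0 vertex_min_top.
  have := disjointFr disj (setU1r (top n) (imset_f widen1 sS)).
  by rewrite mem_emb (subsetP sSW).
Qed.

Lemma setD1_min_top : G :\ emb S = Cface F S.
Proof.
rewrite CfaceE; apply/setP=> W; rewrite in_setD1; apply/andP/imsetP => [[W_nS WG]|[T]].
  have liftW : lift_at S (restr W) = W.
    apply: lift_at_restr => [W_top|W_ntop].
      by rewrite -setU1_emb_subset emb_restr_in ?minS.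
    by apply: contra W_nS => /(top_free_min_top WG W_ntop)->.
  by exists (restr W); rewrite ?inE liftW.
rewrite inE => TG ->; split=> //; rewrite /lift_at; case: ifP => sST.
  by apply: contraTneq (setU11 (top n) (emb T)) => ->; exact: top_notin_emb.
by apply: contraFneq sST => /emb_inj ->.
Qed.

Lemma inQ_min_top : inQ G.
Proof.
exists F; split; first exact: face_min_top.
right; right; exists S; first by rewrite inE /lift_at subxx.
by case: (setD1_cases setD1_min_top) => ->; [left | right].
Qed.

End FaceToQ.

Lemma inQ_iff_face n (G : {set {set 'I_n.+2}}) :
  3 <= n -> inQ G <-> is_face n.+1 G /\ no_top_edge G.
Proof.
move=> n_ge3; split; first exact: inQ_face.
case=> faceG noedgeG; have [vG lamG] := (is_faceP _).1 faceG.
case: (pickP (fun W => (W \in G) && (top n \in W))) => [W0 /andP[W0G W0_top]|G_ntop].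
  have [W [WG W_top] minW] := laminar_min_mem lamG W0G W0_top.
  by apply: (inQ_min_top faceG noedgeG (S := restr W)); rewrite emb_restr_in.
apply: inQ_top_free => // W WG; apply/negP => W_top.
by have := G_ntop W; rewrite WG W_top.
Qed.

Lemma no_top_edge_subset n (G H : {set {set 'I_n.+2}}) :
  no_top_edge G -> H \subset G -> no_top_edge H.
Proof. by move=> noedge /subsetP sHG i /noedge; apply: contra; exact: sHG. Qed.

Lemma inQ_subset n (G H : {set {set 'I_n.+2}}) :
  3 <= n -> inQ G -> H \subset G -> inQ H.
Proof.
move=> n_ge3 /(inQ_iff_face _ n_ge3)[faceG noedgeG] sHG; apply/inQ_iff_face => //.
by split; [exact: face_subset sHG | exact: no_top_edge_subset sHG].
Qed.

(** * Supports of the deformation *)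

Section Collapse.

Variables (n : nat) (G : {set {set 'I_n.+2}}).
Hypotheses (n_ge3 : 3 <= n) (faceG : is_face n.+1 G) (noedgeG : no_top_edge G).

Lemma vertex_setD1_top w : w \in G -> top n \in w -> is_vertex n.+1 (w :\ top n).
Proof.
move=> wG w_top; rewrite -emb_restr; apply: vertex_emb.
have vw := (proj1 ((is_faceP _).1 faceG)) w wG.
have card_w := card_top_vertex faceG noedgeG wG w_top.
by rewrite -(emb_restr_in w_top) in vw card_w; exact: vertex_setU1_embW.
Qed.

Lemma setD1_top_subset_apex w : w \in G -> top n \in w -> w :\ top n \subset apex n.
Proof. by move=> wG w_top; apply: subset_apex (vertex_setD1_top wG w_top) _; rewrite setD11. Qed.

Lemma face_collapse (G' : {set {set 'I_n.+2}}) (begun unfinished : nat -> bool)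
    (to_apex : bool) :
    (forall a b, begun a -> unfinished b -> a <= b) ->
    (to_apex -> forall k, k <= n - 1 -> ~~ unfinished k) ->
    (forall v, v \in G' -> [\/ to_apex /\ v = apex n,
       v \in G /\ (top n \in v -> unfinished #|v|) |
       exists2 w, w \in G & [/\ top n \in w, v = w :\ top n & begun #|w|]]) ->
  is_face n.+1 G' /\ no_top_edge G'.
Proof.
move=> begun_le apex_finished G'_cases; have [vG lamG] := (is_faceP _).1 faceG.
have card_le w : w \in G -> #|w| <= n - 1 by move=> /vG/and3P[_ _]; lia.
split; last first.
  move=> i i_range; have edge_top : top n \in [set i; top n] by rewrite !inE eqxx orbT.
  apply/negP => /G'_cases[[_ eqv]|[vG' _]|[w _ [_ eqv _]]].
  - by rewrite eqv (negbTE (top_notin_emb _)) in edge_top.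
  - by rewrite (negbTE (noedgeG i_range)) in vG'.
  - by rewrite eqv setD11 in edge_top.
have apex_kept u : to_apex -> u \in G -> (top n \in u -> unfinished #|u|) ->
    laminar_pair (apex n) u.
  move=> to_apexT uG u_unf; apply/laminar_pair_supset/subset_apex; first exact: vG.
  exact: contraNN u_unf (apex_finished to_apexT _ (card_le _ uG)).
have apex_dropped w : w \in G -> top n \in w -> laminar_pair (apex n) (w :\ top n).
  by move=> wG w_top; exact/laminar_pair_supset/setD1_top_subset_apex.
have kept_dropped u w : u \in G -> (top n \in u -> unfinished #|u|) ->
    w \in G -> top n \in w -> begun #|w| -> laminar_pair u (w :\ top n).
  move=> uG u_unf wG w_top w_beg; apply: laminar_setD1r (lamG _ _ uG wG) w_top _.
  by move=> /u_unf; exact: begun_le.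
apply/is_faceP; split.
  move=> v /G'_cases[[_ ->]|[/vG //]|[w wG [w_top -> _]]].
  - exact: vertex_apex.
  - exact: vertex_setD1_top.
move=> u v /G'_cases[[to_apexT ->]|[uG u_unf]|[w wG [w_top -> w_beg]]]
        /G'_cases[[to_apexT' ->]|[vG' v_unf]|[w' w'G [w'_top -> w'_beg]]].
- exact: laminar_pair_refl.
- exact: apex_kept.
- exact: apex_dropped.
- by rewrite laminar_pairC; exact: apex_kept.
- exact: lamG.
- exact: kept_dropped.
- by rewrite laminar_pairC; exact: apex_dropped.
- by rewrite laminar_pairC; exact: kept_dropped.
- exact: laminar_setD1 (lamG _ _ wG w'G) w_top w'_top.
Qed.

End Collapse.

(** * The contracting homotopy *)

Lemma sum_indicator (R : pzSemiRingType) (T : finType) (a : T) (F : T -> R) :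
  (\sum_(v : T) (v == a)%:R * F v = F a)%R.
Proof.
rewrite (bigD1 a) //= eqxx mul1r big1 ?addr0 // => v /negbTE ->.
by rewrite mul0r.
Qed.

Section Clamp.

Variable R : realFieldType.
Local Open Scope ring_scope.
Implicit Types a b : R.

Definition clamp01 a : R := if a <= 0 then 0 else if 1 <= a then 1 else a.

Lemma clamp01_itv a : 0 <= clamp01 a <= 1.
Proof. by rewrite /clamp01; case: ifP => ?; [|case: ifP => ?]; apply/andP; split; lra. Qed.

Lemma clamp01_eq0 a : a <= 0 -> clamp01 a = 0.
Proof. by rewrite /clamp01 => ->. Qed.

Lemma clamp01_eq1 a : 1 <= a -> clamp01 a = 1.
Proof. by rewrite /clamp01 => a_ge1; case: ifP => ?; [lra | rewrite a_ge1]. Qed.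

Lemma clamp01_gt0 a : 0 < clamp01 a -> 0 < a.
Proof. by rewrite /clamp01; case: ifP => ?; [|case: ifP => ?]; lra. Qed.

Lemma clamp01_lt1 a : clamp01 a < 1 -> a < 1.
Proof. by rewrite /clamp01; case: ifP => ?; [|case: ifP => ?]; lra. Qed.

Lemma clamp01_lipschitz a b : `|clamp01 a - clamp01 b| <= `|a - b|.
Proof.
rewrite /clamp01; do 4 (try case: ifP => ?);
  case: (lerP 0 (a - b)) => hab; rewrite ?(ger0_norm hab) ?(ltr0_norm hab) ?ler_norml;
  try (apply/andP; split); lra.
Qed.

Lemma norm_mulB_le (p q r u : R) :
  0 <= p <= 1 -> 0 <= q <= 1 -> 0 <= r <= 1 -> 0 <= u <= 1 ->
  `|p * q - r * u| <= `|p - r| + `|q - u|.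
Proof.
move=> /andP[? ?] /andP[? ?] /andP[? ?] /andP[? ?].
have -> : p * q - r * u = (p - r) * q + r * (q - u) by ring.
apply: le_trans (ler_normD _ _) _; rewrite !normrM (ger0_norm (_ : 0 <= q)) //.
rewrite (ger0_norm (_ : 0 <= r)) //; apply: lerD.
  by rewrite -[leRHS]mulr1 ler_wpM2l.
by rewrite -[leRHS]mul1r ler_wpM2r.
Qed.

End Clamp.

Section Homotopy.

Variables (R : realFieldType) (n : nat).
Local Open Scope ring_scope.
Local Notation vert := {set 'I_n.+2}.
Implicit Types (s t l : R) (v w : vert) (x y : vert -> R).

Definition ramp (k : nat) t : R := clamp01 (n.+1%:R * t - k%:R).

Lemma ramp_itv k t : 0 <= ramp k t <= 1.
Proof. exact: clamp01_itv. Qed.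

Lemma ramp_at0 k : ramp k 0 = 0.
Proof. by apply: clamp01_eq0; rewrite mulr0 sub0r oppr_le0 ler0n. Qed.

Lemma ramp_at1 : ramp n 1 = 1.
Proof. by apply: clamp01_eq1; rewrite mulr1 -natrB // subSnn. Qed.

Lemma ramp_mono t a b : 0 < ramp a t -> ramp b t < 1 -> (a <= b)%N.
Proof.
move=> /clamp01_gt0 pos_a /clamp01_lt1 lt1_b.
have : (a%:R : R) < b.+1%:R by rewrite -addn1 natrD; lra.
by rewrite ltr_nat ltnS.
Qed.

Lemma ramp_eq1_of_gt0 t k : (k < n)%N -> 0 < ramp n t -> ramp k t = 1.
Proof.
move=> lt_kn /clamp01_gt0 pos; apply: clamp01_eq1.
have : ((k + 1)%N%:R : R) <= n%:R by rewrite ler_nat addn1.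
by rewrite natrD; lra.
Qed.

Lemma ramp_lipschitz k s t : `|ramp k s - ramp k t| <= n.+1%:R * `|s - t|.
Proof.
apply: le_trans (clamp01_lipschitz _ _) _.
have -> : (n.+1%:R * s - k%:R) - (n.+1%:R * t - k%:R) = n.+1%:R * (s - t) by ring.
by rewrite normrM ger0_norm ?ler0n.
Qed.

(* [shift_weight (v == w) (top n \in w) (v == w :\ top n) l] is the share of the
   mass at [w] that sits at [v] once a fraction [l] of it has been moved from [w]
   to [w :\ top n]; vertices not containing [top n] keep their mass. *)
Definition shift_weight (a b c : bool) l : R := a%:R * (1 - b%:R * l) + (b && c)%:R * l.

Lemma shift_weight_itv a b c l : 0 <= l <= 1 -> 0 <= shift_weight a b c l <= 1.
Proof.
move=> /andP[? ?]; rewrite /shift_weight.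
by case: a; case: b; case: c; rewrite /= ?mul1r ?mul0r ?add0r ?addr0 ?subr0; apply/andP; split; lra.
Qed.

Lemma shift_weight_lipschitz a b c l l' :
  `|shift_weight a b c l - shift_weight a b c l'| <= `|l - l'|.
Proof.
have -> : shift_weight a b c l - shift_weight a b c l' =
          ((b && c)%:R - a%:R * b%:R) * (l - l') by rewrite /shift_weight; ring.
rewrite normrM; apply: ler_piMl; first exact: normr_ge0.
by case: a; case: b; case: c; rewrite /= ?mul1r ?mul0r ?subr0 ?subrr ?sub0r ?normrN ?normr1 ?normr0.
Qed.

Lemma sum_shift_weight (T : finType) (a a' : T) b l :
  \sum_(u : T) shift_weight (u == a) b (u == a') l = 1.
Proof.
rewrite /shift_weight big_split /= (eq_bigr (fun u => (u == a)%:R * (1 - b%:R * l))) //.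
rewrite sum_indicator (eq_bigr (fun u => (u == a')%:R * (b%:R * l))) ?sum_indicator.
  by ring.
by move=> u _; case: b; rewrite /= ?mul1r ?mul0r ?mulr0.
Qed.

Lemma shift_weight_neq0 a b c l : 0 <= l <= 1 -> shift_weight a b c l != 0 ->
  (a /\ (b -> l < 1)) \/ [/\ b, c & 0 < l].
Proof.
rewrite /shift_weight => /andP[l_ge0 l_le1].
case: a; case: b; case: c; rewrite /= ?mul1r ?mul0r ?add0r ?addr0 ?subr0 ?eqxx //;
  try by left.
- by move=> _; case: (ltrP l 1) => [lt1|ge1]; [left | right; split=> //; lra].
- move=> nz; left; split=> // _; rewrite lt_neqAle l_le1 andbT.
  by apply: contra_neq nz => ->; exact: subrr.
- by move=> nz; right; split=> //; rewrite lt_def nz.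
Qed.

Definition kernel t v w : R :=
  (1 - ramp n t) * shift_weight (v == w) (top n \in w) (v == w :\ top n) (ramp #|w| t).

Definition homotopy x t v : R :=
  \sum_w kernel t v w * x w + ramp n t * (v == apex n)%:R.

Lemma kernel_itv t v w : 0 <= kernel t v w <= 1.
Proof.
have /andP[? ?] := ramp_itv n t.
have /andP[? ?] := shift_weight_itv (v == w) (top n \in w) (v == w :\ top n) (ramp_itv #|w| t).
by rewrite /kernel; apply/andP; split; nra.
Qed.

Lemma kernel_lipschitz s t v w :
  `|kernel s v w - kernel t v w| <= 2 * n.+1%:R * `|s - t|.
Proof.
have co_itv r : 0 <= 1 - ramp n r <= 1.
  by have /andP[? ?] := ramp_itv n r; apply/andP; split; lra.
have sw_itv r : 0 <= shift_weight (v == w) (top n \in w) (v == w :\ top n) (ramp #|w| r) <= 1.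
  exact/shift_weight_itv/ramp_itv.
apply: le_trans (norm_mulB_le (co_itv s) (sw_itv s) (co_itv t) (sw_itv t)) _.
have -> : 1 - ramp n s - (1 - ramp n t) = - (ramp n s - ramp n t) by ring.
rewrite normrN; have := ramp_lipschitz n s t.
have := shift_weight_lipschitz (v == w) (top n \in w) (v == w :\ top n) (ramp #|w| s) (ramp #|w| t).
have := ramp_lipschitz #|w| s t; lra.
Qed.

Lemma sum_kernel t w : \sum_v kernel t v w = 1 - ramp n t.
Proof. by rewrite -big_distrr /= sum_shift_weight mulr1. Qed.

Lemma kernel_at0 v w : kernel 0 v w = (v == w)%:R.
Proof. by rewrite /kernel /shift_weight !ramp_at0 subr0 mul1r !mulr0 subr0 mulr1 addr0. Qed.

Lemma homotopy_at0 x : homotopy x 0 = x.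
Proof.
apply: functional_extensionality => v; rewrite /homotopy ramp_at0 mul0r addr0.
under eq_bigr => w _ do rewrite kernel_at0 eq_sym.
exact: sum_indicator.
Qed.

Lemma homotopy_at1 x : homotopy x 1 = fun v => (v == apex n)%:R.
Proof.
apply: functional_extensionality => v; rewrite /homotopy ramp_at1 mul1r big1 ?add0r //.
by move=> w _; rewrite /kernel ramp_at1 subrr !mul0r.
Qed.

Lemma homotopy_ge0 x t v : (forall w, 0 <= x w) -> 0 <= homotopy x t v.
Proof.
move=> x_ge0; apply: addr_ge0; last by apply: mulr_ge0; [case/andP: (ramp_itv n t)|].
by apply: sumr_ge0 => w _; apply: mulr_ge0 => //; case/andP: (kernel_itv t v w).
Qed.

Lemma sum_homotopy x t : \sum_w x w = 1 -> \sum_v homotopy x t v = 1.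
Proof.
move=> sum_x; rewrite big_split /= exchange_big /=.
under eq_bigr => w _ do rewrite -big_distrl /= sum_kernel.
under [X in _ + X]eq_bigr => v _ do rewrite mulrC.
by rewrite -big_distrr /= sum_x sum_indicator; ring.
Qed.

Lemma kernel_mass_neq0 x t v : \sum_w kernel t v w * x w != 0 ->
  x v != 0 /\ (top n \in v -> ramp #|v| t < 1) \/
  exists2 w, x w != 0 & [/\ top n \in w, v = w :\ top n & 0 < ramp #|w| t].
Proof.
move=> /eqP sum_nz; have [w|all0] := pickP (fun w => kernel t v w * x w != 0); last first.
  by case: sum_nz; apply: big1 => w _; apply/eqP/negbFE/all0.
rewrite mulf_eq0 negb_or => /andP[kernel_nz xw_nz].
move: kernel_nz; rewrite /kernel mulf_eq0 negb_or => /andP[_].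
case/(shift_weight_neq0 (ramp_itv _ _)) => [[/eqP -> unf]|[w_top /eqP -> beg]].
  by left.
by right; exists w.
Qed.

Lemma homotopy_neq0 x t v : homotopy x t v != 0 ->
  [\/ 0 < ramp n t /\ v = apex n,
      x v != 0 /\ (top n \in v -> ramp #|v| t < 1) |
      exists2 w, x w != 0 & [/\ top n \in w, v = w :\ top n & 0 < ramp #|w| t]].
Proof.
have mass_case := @kernel_mass_neq0 x t v; rewrite /homotopy.
have [ramp0|ramp_nz] := eqVneq (ramp n t) 0.
  by rewrite ramp0 mul0r addr0 => /mass_case[]; [apply: Or32 | apply: Or33].
have [v_apex|v_napex] := eqVneq v (apex n).
  by move=> _; apply: Or31; split=> //; rewrite lt_def ramp_nz; case/andP: (ramp_itv n t).
by rewrite /= mulr0n mulr0 addr0 => /mass_case[]; [apply: Or32 | apply: Or33].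
Qed.

Lemma kernel_mass_lipschitz x y s t v w (d : R) :
  0 <= x w -> `|y w - x w| <= d -> `|s - t| <= d ->
  `|kernel s v w * y w - kernel t v w * x w| <= d + 2 * n.+1%:R * d * x w.
Proof.
move=> xw_ge0 dy dt.
have -> : kernel s v w * y w - kernel t v w * x w =
          kernel s v w * (y w - x w) + (kernel s v w - kernel t v w) * x w by ring.
have /andP[k_ge0 k_le1] := kernel_itv s v w.
apply: le_trans (ler_normD _ _) _; rewrite (normrM (kernel s v w)) (ger0_norm k_ge0).
rewrite (normrM (kernel s v w - _)) (ger0_norm xw_ge0).
apply: lerD; first by apply: le_trans dy; rewrite ler_piMl.
rewrite ler_wpM2r //; apply: le_trans (kernel_lipschitz s t v w) _.
by rewrite ler_wpM2l // mulr_ge0 ?ler0n.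
Qed.

Lemma homotopy_lipschitz x y s t (d : R) v :
    (forall w, 0 <= x w) -> \sum_w x w = 1 ->
    (forall w, `|y w - x w| <= d) -> `|s - t| <= d ->
  `|homotopy y s v - homotopy x t v| <= (#|vert|%:R + 3 * n.+1%:R) * d.
Proof.
move=> x_ge0 sum_x dy dt.
have -> : homotopy y s v - homotopy x t v =
    \sum_w (kernel s v w * y w - kernel t v w * x w) +
    (ramp n s - ramp n t) * (v == apex n)%:R by rewrite /homotopy sumrB; ring.
apply: le_trans (ler_normD _ _) _.
have mass_le : `|\sum_w (kernel s v w * y w - kernel t v w * x w)| <=
               #|vert|%:R * d + 2 * n.+1%:R * d.
  apply: le_trans (ler_norm_sum _ _ _) _.
  apply: le_trans (ler_sum _ (fun w _ => kernel_mass_lipschitz v (x_ge0 w) (dy w) dt)) _.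
  by rewrite big_split /= sumr_const -big_distrr /= sum_x mulr1 -[d *+ _]mulr_natl.
have apex_le : `|(ramp n s - ramp n t) * (v == apex n)%:R| <= n.+1%:R * d.
  rewrite normrM; have := ramp_lipschitz n s t.
  have : `|(v == apex n)%:R : R| <= 1 by case: (v == apex n); rewrite ?normr1 ?normr0.
  have := normr_ge0 (ramp n s - ramp n t); have := normr_ge0 ((v == apex n)%:R : R).
  have : (0 : R) <= n.+1%:R by rewrite ler0n.
  nra.
lra.
Qed.

Lemma homotopy_continuous x t (e : R) : (forall w, 0 <= x w) -> \sum_w x w = 1 -> 0 < e ->
  exists2 d : R, 0 < d & forall y s, (forall v, `|y v - x v| < d) -> `|s - t| < d ->
    forall v, `|homotopy y s v - homotopy x t v| < e.
Proof.
move=> x_ge0 sum_x e_gt0; set C : R := #|vert|%:R + 3 * n.+1%:R.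
have C_ge0 : 0 <= C by rewrite /C; apply: addr_ge0; rewrite ?mulr_ge0 ?ler0n.
exists (e / (C + 1)); first by rewrite divr_gt0 // ltr_wpDl.
move=> y s dy dt v; apply: le_lt_trans (homotopy_lipschitz v x_ge0 sum_x _ _) _.
- by move=> w; exact/ltW/dy.
- exact: ltW.
by rewrite -/C mulrA ltr_pdivrMr ?ltr_wpDl //; nra.
Qed.

End Homotopy.
Section Realization.

Local Open Scope ring_scope.

Lemma realization_apex n :
  (3 <= n)%N -> realization (@inQ n) (fun v => (v == apex n)%:R).
Proof.
move=> n_ge3; split=> [v|]; first exact: ler0n.
split; first by rewrite -[RHS](sum_indicator (apex n) (fun=> 1)); apply: eq_bigr => v _; rewrite mulr1.
have -> : [set v | (v == apex n)%:R != 0 :> Rdefinitions.R] = [set apex n].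
  by apply/setP=> v; rewrite !inE; case: (v == apex n); rewrite ?oner_eq0 ?eqxx.
apply/inQ_iff_face => //; split.
  apply/is_faceP; split=> [S|S U]; rewrite ?inE => /eqP->; first exact: vertex_apex.
  by move=> /eqP->; exact: laminar_pair_refl.
by apply: no_top_edgeI => _ /set1P->; rewrite (negbTE (top_notin_emb _)).
Qed.

Lemma realization_homotopy n (x : {set 'I_n.+2} -> Rdefinitions.R) t :
  (3 <= n)%N -> realization (@inQ n) x -> realization (@inQ n) (homotopy x t).
Proof.
move=> n_ge3 [x_ge0 [sum_x /(inQ_iff_face _ n_ge3)[faceG noedgeG]]].
split; first by move=> v; exact: homotopy_ge0.
split; first exact: sum_homotopy.
apply/inQ_iff_face => //.
apply: (face_collapse n_ge3 faceG noedgeG (begun := fun k => 0 < ramp n k t)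
  (unfinished := fun k => ramp n k t < 1) (to_apex := 0 < ramp n n t)).
- exact: ramp_mono.
- by move=> pos k le_k; rewrite ramp_eq1_of_gt0 ?ltxx //; lia.
move=> v; rewrite inE => /homotopy_neq0[| [xv_nz unf] | [w xw_nz [w_top -> beg]]].
- by apply: Or31.
- by apply: Or32; rewrite inE xv_nz.
- by apply: Or33; exists w; rewrite ?inE.
Qed.

End Realization.

Theorem mainTheorem11 (n : nat) (hn : 3 <= n) :
  subcomplex (@inQ n) (fun G => is_face n.+1 G) /\
  (forall G : {set {set 'I_n.+2}},
     inQ G <->
     (is_face n.+1 G /\
      forall i : 'I_n.+2, 2 <= i <= n -> [set i; top n] \notin G)) /\
  contractible (realization (@inQ n)).
Proof.
split; first by split=> [G /(inQ_face hn)[] // | G H GQ]; exact: inQ_subset hn GQ.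
split; first by move=> G; exact: inQ_iff_face.
exists (fun v => (v == apex n)%:R)%R, (@homotopy Rdefinitions.R n); split; first exact: realization_apex.
split; first by move=> x t xQ _; exact: realization_homotopy.
split; first by move=> x _; rewrite homotopy_at0 homotopy_at1.
move=> x t [x_ge0 [sum_x _]] _ e e_gt0.
have [d d_gt0 cont] := homotopy_continuous t x_ge0 sum_x e_gt0.
by exists d => // y s _ _; exact: cont.
Qed.
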